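(* Fix an integer $d\geq 2$ and $\theta\in\mathbb{R}$, and let $w=\frac{e^{id\theta}-de^{i\theta}}{d+1}$ with $|w|<1$. Let $z_0$ be the Denjoy–Wolff point of $B_w(z)=\left(\frac{z-w}{1-\overline{w}z}\right)^d$. Then $z_0=e^{id\theta}$.
   Context: $\mathbb{D}$ denotes the open unit disk. By the Denjoy–Wolff theorem, a finite Blaschke product $B$ of degree at least $2$ has a unique point $z_0\in\overline{\mathbb{D}}$, its Denjoy–Wolff point, such that $B^n(z)\to z_0$ for every $z\in\mathbb{D}$. *)

From Stdlib Require Import Reals.
From Coquelicot Require Import Coquelicot.

Open Scope C_scope.

Definition expi (t : R) : C := (cos t, sin t).

Definition Bw (d : nat) (w : C) (z : C) : C :=
  Cpow ((z - w) / (1 - Cconj w * z)) d.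

Definition is_DW_point (f : C -> C) (z0 : C) : Prop :=
  (Cmod z0 <= 1)%R /\
  forall z : C, (Cmod z < 1)%R ->
    filterlim (fun n : nat => Nat.iter n f z) eventually (locally z0).

From Stdlib Require Import Reals Lra Psatz Classical.
From Coquelicot Require Import Coquelicot.

(* Write u = e^{i theta} and p = e^{i d theta} = u^d.  The choice of w makes the Moebius map
   phi_w(z) = (z - w) / (1 - conj w z) send p to u with |phi_w'(p)| = 1/d, so p is a boundary
   fixed point of B_w = phi_w^d with angular derivative 1.  Moebius maps rescale the Poisson
   kernel P(z) = (1 - |z|^2) / |p - z|^2 by the angular derivative, and z |-> z^d gains the extra
   term (1 - |z|^2) / d^3 on top of the factor 1/d, because n sum |v^k|^2 - |sum v^k|^2 >= |1 - v|^2
   for n >= 2.  Hence P grows along every orbit with increments at least c |z - p|^2, while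
   |z - p| P(z) <= 2; either P is bounded and the increments tend to 0, or P is unbounded, and in
   both cases the orbit tends to p. *)

Local Open Scope R_scope.

Definition Cnorm2 (z : C) : R := fst z * fst z + snd z * snd z.

Lemma Cnorm2_ge0 (z : C) : 0 <= Cnorm2 z.
Proof. unfold Cnorm2; nra. Qed.

Lemma Cnorm2_Cmod (z : C) : Cnorm2 z = Cmod z ^ 2.
Proof.
  unfold Cmod, Cnorm2. rewrite pow2_sqrt by nra. ring.
Qed.

Lemma Cnorm2_lt_1 (z : C) : Cmod z < 1 -> Cnorm2 z < 1.
Proof. rewrite Cnorm2_Cmod. pose proof (Cmod_ge_0 z). nra. Qed.

Lemma Cnorm2_mult (a b : C) : Cnorm2 (a * b)%C = Cnorm2 a * Cnorm2 b.
Proof. destruct a, b; unfold Cnorm2; simpl; ring. Qed.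

Lemma Cnorm2_pow (z : C) (n : nat) : Cnorm2 (Cpow z n) = Cnorm2 z ^ n.
Proof.
  induction n as [|n IH]; simpl.
  - unfold Cnorm2; simpl; ring.
  - rewrite Cnorm2_mult, IH; ring.
Qed.

Lemma Cnorm2_div (a b : C) : Cnorm2 b <> 0 -> Cnorm2 (a / b)%C = Cnorm2 a / Cnorm2 b.
Proof.
  destruct a as [a1 a2], b as [b1 b2]; unfold Cnorm2; simpl; intros Hb.
  field_simplify; try field; nra.
Qed.

Lemma Cnorm2_conj (z : C) : Cnorm2 (Cconj z) = Cnorm2 z.
Proof. destruct z; unfold Cnorm2; simpl; ring. Qed.

Lemma Cnorm2_eq0 (z : C) : Cnorm2 z = 0 -> z = 0%C.
Proof.
  destruct z as [a b]; unfold Cnorm2; simpl; intros H.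
  assert (a = 0) by nra; assert (b = 0) by nra; subst; reflexivity.
Qed.

Lemma Cnorm2_sub_pos (p z : C) : Cnorm2 p = 1 -> Cnorm2 z < 1 -> 0 < Cnorm2 (p - z)%C.
Proof.
  intros Hp Hz. destruct (Cnorm2_ge0 (p - z)%C) as [Hpos|H0]; [exact Hpos|].
  symmetry in H0; apply Cnorm2_eq0 in H0.
  replace z with p in Hz by (replace z with (p - (p - z))%C by ring; rewrite H0; ring).
  lra.
Qed.

Lemma Cnorm2_one_sub_pos (x : C) : Cnorm2 x < 1 -> 0 < Cnorm2 (1 - x)%C.
Proof. destruct x as [a b]; unfold Cnorm2; simpl; intros H; nra. Qed.

Lemma Cnorm2_one_sub_le_4 (x : C) : Cnorm2 x <= 1 -> Cnorm2 (1 - x)%C <= 4.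
Proof. destruct x as [a b]; unfold Cnorm2; simpl; intros H; nra. Qed.

Lemma Cnorm2_eq_mul_conj (z : C) : RtoC (Cnorm2 z) = (z * Cconj z)%C.
Proof. destruct z; unfold Cnorm2; apply injective_projections; simpl; ring. Qed.

Lemma Cconj_eq_inv (z : C) : Cnorm2 z = 1 -> Cconj z = (/ z)%C.
Proof.
  destruct z as [a b]; unfold Cnorm2, Cconj, Cinv; simpl; intros H.
  rewrite !Rmult_1_r, H.
  apply injective_projections; simpl; field.
Qed.

Fixpoint geom_sum (v : C) (n : nat) : C :=
  match n with O => 0%C | S k => (geom_sum v k + Cpow v k)%C end.

Fixpoint geom_sumR (r : R) (n : nat) : R :=
  match n with O => 0 | S k => geom_sumR r k + r ^ k end.

Lemma geom_sum_mul (v : C) (n : nat) : ((1 - v) * geom_sum v n)%C = (1 - Cpow v n)%C.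
Proof.
  induction n as [|n IH]; simpl; [ring|].
  rewrite Cmult_plus_distr_l, IH; ring.
Qed.

Lemma geom_sumR_mul (r : R) (n : nat) : (1 - r) * geom_sumR r n = 1 - r ^ n.
Proof.
  induction n as [|n IH]; simpl; [ring|].
  rewrite Rmult_plus_distr_l, IH; ring.
Qed.

(* [geom_var v n] equals the sum of [|v^j - v^k|^2] over [j < k < n]. *)
Definition geom_var (v : C) (n : nat) : R :=
  INR n * geom_sumR (Cnorm2 v) n - Cnorm2 (geom_sum v n).

Lemma geom_var_succ (v : C) (n : nat) :
  INR n * geom_var v (S n)
  = (INR n + 1) * geom_var v n + Cnorm2 (geom_sum v n - RtoC (INR n) * Cpow v n)%C.
Proof.
  unfold geom_var; simpl geom_sumR; simpl geom_sum; rewrite S_INR.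
  rewrite <- Cnorm2_pow.
  destruct (geom_sum v n), (Cpow v n); unfold Cnorm2; simpl; ring.
Qed.

Lemma geom_var_ge0 (v : C) (n : nat) : 0 <= geom_var v n.
Proof.
  induction n as [|n IH].
  - unfold geom_var; simpl; unfold Cnorm2; simpl; lra.
  - destruct n as [|n].
    + unfold geom_var; simpl; destruct v; unfold Cnorm2; simpl; lra.
    + pose proof (geom_var_succ v (S n)) as E.
      pose proof (Cnorm2_ge0 (geom_sum v (S n) - RtoC (INR (S n)) * Cpow v (S n))%C).
      pose proof (pos_INR (S n)). pose proof (lt_0_INR (S n) (Nat.lt_0_succ n)).
      nra.
Qed.

Lemma geom_var_le_succ (v : C) (n : nat) : (1 <= n)%nat -> geom_var v n <= geom_var v (S n).
Proof.
  intros Hn. pose proof (geom_var_succ v n) as E. pose proof (geom_var_ge0 v n).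
  pose proof (Cnorm2_ge0 (geom_sum v n - RtoC (INR n) * Cpow v n)%C).
  assert (1 <= INR n) by (apply (le_INR 1); exact Hn).
  nra.
Qed.

Lemma geom_var_ge (v : C) (n : nat) : (2 <= n)%nat -> Cnorm2 (1 - v)%C <= geom_var v n.
Proof.
  induction 1 as [|n Hn IH].
  - unfold geom_var; simpl; destruct v; unfold Cnorm2; simpl; nra.
  - eapply Rle_trans; [exact IH|]. apply geom_var_le_succ; lia.
Qed.

Lemma Cnorm2_one_sub_pow_mul_le (v : C) (n : nat) : (2 <= n)%nat -> Cnorm2 v <= 1 ->
  Cnorm2 (1 - Cpow v n)%C * (1 - Cnorm2 v) + (1 - Cnorm2 v) * Cnorm2 (1 - v)%C ^ 2
  <= INR n * (1 - Cnorm2 v ^ n) * Cnorm2 (1 - v)%C.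
Proof.
  intros Hn Hv.
  rewrite <- geom_sumR_mul, <- geom_sum_mul, Cnorm2_mult.
  pose proof (geom_var_ge v n Hn) as Hq; unfold geom_var in Hq.
  pose proof (Cnorm2_ge0 (1 - v)%C).
  assert (0 <= (1 - Cnorm2 v) * Cnorm2 (1 - v)%C) by nra.
  nra.
Qed.

Lemma Cmod_one_sub_pow_le (v : C) (n : nat) :
  Cmod v <= 1 -> Cmod (1 - Cpow v n)%C <= INR n * Cmod (1 - v)%C.
Proof.
  intros Hv. induction n as [|n IH].
  - simpl. replace (1 - 1)%C with (RtoC 0) by ring. rewrite Cmod_0. lra.
  - change (Cpow v (S n)) with (v * Cpow v n)%C.
    replace (1 - v * Cpow v n)%C with ((1 - Cpow v n) + Cpow v n * (1 - v))%C by ring.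
    eapply Rle_trans; [apply Cmod_triangle|]. rewrite Cmod_mult, Cmod_pow, S_INR.
    assert (Cmod v ^ n <= 1)
      by (rewrite <- (pow1 n); apply pow_incr; split; [apply Cmod_ge_0|exact Hv]).
    pose proof (Cmod_ge_0 (1 - v)%C). nra.
Qed.

Definition poisson (p z : C) : R := (1 - Cnorm2 z) / Cnorm2 (p - z)%C.

Lemma poisson_pos (p z : C) : Cnorm2 p = 1 -> Cnorm2 z < 1 -> 0 < poisson p z.
Proof.
  intros Hp Hz. apply Rdiv_lt_0_compat; [lra|]. exact (Cnorm2_sub_pos p z Hp Hz).
Qed.

Lemma Cmod_sub_mul_poisson_le (p z : C) :
  Cnorm2 p = 1 -> Cnorm2 z < 1 -> Cmod (z - p)%C * poisson p z <= 2.
Proof.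
  intros Hp Hz. unfold poisson.
  pose proof (Cnorm2_sub_pos p z Hp Hz) as Hpz.
  replace (z - p)%C with (- (p - z))%C by ring. rewrite Cmod_opp.
  rewrite Cnorm2_Cmod in Hp, Hz, Hpz |- *. rewrite Cnorm2_Cmod.
  assert (Hp1 : Cmod p = 1) by (pose proof (Cmod_ge_0 p); nra).
  assert (Cmod p <= Cmod (p - z)%C + Cmod z)
    by (replace p with ((p - z) + z)%C at 1 by ring; apply Cmod_triangle).
  pose proof (Cmod_ge_0 z). pose proof (Cmod_ge_0 (p - z)%C).
  set (r := Cmod (p - z)%C) in *. set (s := Cmod z) in *.
  assert (0 < r) by nra.
  replace (r * ((1 - s ^ 2) / r ^ 2)) with ((1 - s ^ 2) / r) by (field; lra).
  apply Rle_div_l; [lra|].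
  assert (s < 1) by nra.
  assert ((1 - s) * (1 + s) <= r * 2) by (apply Rmult_le_compat; lra).
  nra.
Qed.

Lemma poisson_rotate (u a b : C) : Cnorm2 u = 1 -> poisson (u * a) (u * b) = poisson a b.
Proof.
  intros Hu. unfold poisson.
  replace (u * a - u * b)%C with (u * (a - b))%C by ring.
  rewrite !Cnorm2_mult, Hu, !Rmult_1_l. reflexivity.
Qed.

Lemma poisson_pow_one (v : C) (n : nat) : (2 <= n)%nat -> Cnorm2 v < 1 ->
  poisson 1 v / INR n + (1 - Cnorm2 v) / INR n ^ 3 <= poisson 1 (Cpow v n).
Proof.
  intros Hn Hv. unfold poisson. rewrite Cnorm2_pow.
  assert (Hone : Cnorm2 1%C = 1) by (unfold Cnorm2; simpl; ring).
  assert (HE : 0 < Cnorm2 (1 - v)%C) by exact (Cnorm2_sub_pos 1 v Hone Hv).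
  assert (HF : 0 < Cnorm2 (1 - Cpow v n)%C).
  { apply Cnorm2_sub_pos; [exact Hone|]. rewrite Cnorm2_pow.
    apply pow_lt_1_compat; [split; [apply Cnorm2_ge0|exact Hv]|lia]. }
  assert (HN : 2 <= INR n) by (apply (le_INR 2); exact Hn).
  pose proof (Cnorm2_one_sub_pow_mul_le v n Hn (Rlt_le _ _ Hv)) as Hvar.
  assert (Hsq : Cnorm2 (1 - Cpow v n)%C <= INR n ^ 2 * Cnorm2 (1 - v)%C).
  { assert (Cmod v <= 1) by (rewrite Cnorm2_Cmod in Hv; pose proof (Cmod_ge_0 v); nra).
    rewrite !Cnorm2_Cmod.
    pose proof (Cmod_one_sub_pow_le v n H). pose proof (Cmod_ge_0 (1 - Cpow v n)%C).
    replace (INR n ^ 2 * Cmod (1 - v)%C ^ 2) with ((INR n * Cmod (1 - v)%C) ^ 2) by ring.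
    apply pow_incr; lra. }
  set (E := Cnorm2 (1 - v)%C) in *. set (F := Cnorm2 (1 - Cpow v n)%C) in *.
  set (Y := 1 - Cnorm2 v) in *. set (G := 1 - Cnorm2 v ^ n) in *.
  assert (HY : 0 < Y) by (unfold Y; lra).
  assert (Hkey : INR n ^ 2 * F * Y + E * F * Y <= INR n ^ 3 * E * G).
  { assert (E * F * Y <= INR n ^ 2 * E * E * Y) by (apply Rmult_le_compat_r; nra).
    assert (INR n ^ 2 * (F * Y + Y * E ^ 2) <= INR n ^ 2 * (INR n * G * E))
      by (apply Rmult_le_compat_l; nra).
    nra. }
  apply (Rmult_le_reg_r (INR n ^ 3 * E * F)); [apply Rmult_lt_0_compat; [|lra]; nra|].
  replace ((Y / E / INR n + Y / INR n ^ 3) * (INR n ^ 3 * E * F))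
    with (INR n ^ 2 * F * Y + E * F * Y) by (field; lra).
  replace (G / F * (INR n ^ 3 * E * F)) with (INR n ^ 3 * E * G) by (field; lra).
  exact Hkey.
Qed.

Lemma Cpow_mult (a b : C) (n : nat) : Cpow (a * b)%C n = (Cpow a n * Cpow b n)%C.
Proof. induction n as [|n IH]; simpl; [ring|]. rewrite IH; ring. Qed.

Lemma poisson_pow (u y : C) (n : nat) : (2 <= n)%nat -> Cnorm2 u = 1 -> Cnorm2 y < 1 ->
  poisson u y / INR n + (1 - Cnorm2 y) / INR n ^ 3 <= poisson (Cpow u n) (Cpow y n).
Proof.
  intros Hn Hu Hy.
  set (v := (y * Cconj u)%C).
  assert (Hyv : y = (u * v)%C).
  { unfold v. replace (u * (y * Cconj u))%C with (y * (u * Cconj u))%C by ring.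
    rewrite <- Cnorm2_eq_mul_conj, Hu. ring. }
  assert (Hun : Cnorm2 (Cpow u n) = 1) by (rewrite Cnorm2_pow, Hu; apply pow1).
  assert (Hv : Cnorm2 v = Cnorm2 y) by (unfold v; rewrite Cnorm2_mult, Cnorm2_conj, Hu; ring).
  rewrite Hyv, Cpow_mult.
  rewrite <- (Cmult_1_r (Cpow u n)) at 1.
  rewrite poisson_rotate by exact Hun.
  rewrite <- (Cmult_1_r u) at 1. rewrite poisson_rotate by exact Hu.
  rewrite <- Hyv, <- Hv.
  apply poisson_pow_one; [exact Hn|lra].
Qed.

Definition mobius (w z : C) : C := ((z - w) / (1 - Cconj w * z))%C.

Lemma mobius_den_pos (w z : C) :
  Cnorm2 w < 1 -> Cnorm2 z <= 1 -> 0 < Cnorm2 (1 - Cconj w * z)%C.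
Proof.
  intros Hw Hz. apply Cnorm2_one_sub_pos. rewrite Cnorm2_mult, Cnorm2_conj.
  pose proof (Cnorm2_ge0 w). pose proof (Cnorm2_ge0 z). nra.
Qed.

Lemma one_sub_Cnorm2_mobius (w z : C) : Cnorm2 w < 1 -> Cnorm2 z <= 1 ->
  1 - Cnorm2 (mobius w z) = (1 - Cnorm2 w) * (1 - Cnorm2 z) / Cnorm2 (1 - Cconj w * z)%C.
Proof.
  intros Hw Hz. pose proof (mobius_den_pos w z Hw Hz).
  unfold mobius. rewrite Cnorm2_div by lra.
  assert (E : Cnorm2 (1 - Cconj w * z)%C - Cnorm2 (z - w)%C = (1 - Cnorm2 w) * (1 - Cnorm2 z))
    by (destruct w, z; unfold Cnorm2; simpl; ring).
  rewrite <- E. field. lra.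
Qed.

Lemma Cnorm2_mobius_sub (w a b : C) : Cnorm2 w < 1 -> Cnorm2 a <= 1 -> Cnorm2 b <= 1 ->
  Cnorm2 (mobius w a - mobius w b)%C
  = (1 - Cnorm2 w) ^ 2 * Cnorm2 (a - b)%C
    / (Cnorm2 (1 - Cconj w * a)%C * Cnorm2 (1 - Cconj w * b)%C).
Proof.
  intros Hw Ha Hb.
  pose proof (mobius_den_pos w a Hw Ha) as Da. pose proof (mobius_den_pos w b Hw Hb) as Db.
  assert (Na : (1 - Cconj w * a)%C <> 0%C)
    by (intro H; rewrite H in Da; unfold Cnorm2 in Da; simpl in Da; lra).
  assert (Nb : (1 - Cconj w * b)%C <> 0%C)
    by (intro H; rewrite H in Db; unfold Cnorm2 in Db; simpl in Db; lra).
  assert (E : (mobius w a - mobius w b)%C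
              = (RtoC (1 - Cnorm2 w) * (a - b) / ((1 - Cconj w * a) * (1 - Cconj w * b)))%C).
  { unfold mobius. rewrite RtoC_minus, Cnorm2_eq_mul_conj. field. split; assumption. }
  rewrite E, Cnorm2_div, !Cnorm2_mult.
  - f_equal. unfold Cnorm2 at 1; simpl. ring.
  - rewrite Cnorm2_mult. nra.
Qed.

Lemma poisson_mobius (w p z : C) : Cnorm2 w < 1 -> Cnorm2 p = 1 -> Cnorm2 z < 1 ->
  poisson (mobius w p) (mobius w z)
  = Cnorm2 (1 - Cconj w * p)%C / (1 - Cnorm2 w) * poisson p z.
Proof.
  intros Hw Hp Hz. unfold poisson.
  pose proof (mobius_den_pos w p Hw (Req_le _ _ Hp)).
  pose proof (mobius_den_pos w z Hw (Rlt_le _ _ Hz)).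
  pose proof (Cnorm2_sub_pos p z Hp Hz).
  rewrite one_sub_Cnorm2_mobius, Cnorm2_mobius_sub by lra.
  field. repeat split; lra.
Qed.

Lemma Cconj_div_RtoC (a : C) (r : R) : r <> 0 -> Cconj (a / RtoC r)%C = (Cconj a / RtoC r)%C.
Proof.
  intros Hr. destruct a as [a1 a2].
  unfold Cconj, Cdiv, Cinv, Cmult, RtoC; simpl.
  apply injective_projections; simpl; field; exact Hr.
Qed.

(* With [w = (p - D u) / (D + 1)] one has [p - w = D (p + u) / (D + 1) = u (1 - conj w p)]. *)
Lemma mobius_boundary (p u w : C) (D : R) : 0 < D -> Cnorm2 p = 1 -> Cnorm2 u = 1 ->
  w = ((p - RtoC D * u) / RtoC (D + 1))%C -> Cnorm2 w < 1 ->
  mobius w p = u /\ Cnorm2 (1 - Cconj w * p)%C = D * (1 - Cnorm2 w).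
Proof.
  intros HD Hp Hu Hwdef Hw.
  assert (Hp0 : p <> 0%C) by (intro H; rewrite H in Hp; unfold Cnorm2 in Hp; simpl in Hp; lra).
  assert (Hu0 : u <> 0%C) by (intro H; rewrite H in Hu; unfold Cnorm2 in Hu; simpl in Hu; lra).
  assert (HD1 : (RtoC D + 1)%C <> 0%C)
    by (rewrite <- RtoC_plus; intro H; apply (f_equal fst) in H; simpl in H; lra).
  assert (Hcw : Cconj w = ((/ p - RtoC D * / u) / (RtoC D + 1))%C).
  { rewrite Hwdef, Cconj_div_RtoC by lra.
    rewrite Cminus_conj, Cmult_conj, (Cconj_eq_inv p Hp), (Cconj_eq_inv u Hu), RtoC_plus.
    replace (Cconj (RtoC D)) with (RtoC D) by (apply injective_projections; simpl; ring).
    reflexivity. }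
  rewrite RtoC_plus in Hwdef.
  pose proof (mobius_den_pos w p Hw (Req_le _ _ Hp)) as Hden.
  assert (Hden0 : (1 - Cconj w * p)%C <> 0%C)
    by (intro H; rewrite H in Hden; unfold Cnorm2 in Hden; simpl in Hden; lra).
  split.
  - assert (Hpw : (p - w = u * (1 - Cconj w * p))%C)
      by (rewrite Hcw, Hwdef; field; auto).
    unfold mobius. rewrite Hpw. field. exact Hden0.
  - assert (H : RtoC (Cnorm2 (1 - Cconj w * p)%C) = RtoC (D * (1 - Cnorm2 w))).
    { rewrite RtoC_mult, RtoC_minus, !Cnorm2_eq_mul_conj, Cminus_conj, Cmult_conj, Cconj_conj.
      replace (Cconj (RtoC 1)) with (RtoC 1) by (apply injective_projections; simpl; ring).
      rewrite Hcw, (Cconj_eq_inv p Hp), Hwdef. field. auto. }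
    apply (f_equal fst) in H. exact H.
Qed.

Lemma Cnorm2_mobius_lt_1 (w z : C) : Cnorm2 w < 1 -> Cnorm2 z < 1 -> Cnorm2 (mobius w z) < 1.
Proof.
  intros Hw Hz. pose proof (one_sub_Cnorm2_mobius w z Hw (Rlt_le _ _ Hz)) as E.
  pose proof (mobius_den_pos w z Hw (Rlt_le _ _ Hz)).
  assert (0 < (1 - Cnorm2 w) * (1 - Cnorm2 z) / Cnorm2 (1 - Cconj w * z)%C)
    by (apply Rdiv_lt_0_compat; [apply Rmult_lt_0_compat|]; lra).
  lra.
Qed.

Lemma poisson_Bw_gain (d : nat) (p u w z : C) : (2 <= d)%nat ->
  Cnorm2 u = 1 -> Cpow u d = p -> Cnorm2 w < 1 ->
  mobius w p = u -> Cnorm2 (1 - Cconj w * p)%C = INR d * (1 - Cnorm2 w) ->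
  Cnorm2 z < 1 ->
  Cnorm2 (Bw d w z) < 1 /\
  poisson p z + (1 - Cnorm2 w) / (4 * INR d ^ 3) * (1 - Cnorm2 z) <= poisson p (Bw d w z).
Proof.
  intros Hd Hu Hup Hw Hfix Hden Hz.
  change (Bw d w z) with (Cpow (mobius w z) d).
  set (y := mobius w z).
  assert (HD : 2 <= INR d) by (apply (le_INR 2); exact Hd).
  assert (Hp : Cnorm2 p = 1) by (rewrite <- Hup, Cnorm2_pow, Hu; apply pow1).
  assert (Hy : Cnorm2 y < 1) by exact (Cnorm2_mobius_lt_1 w z Hw Hz).
  assert (Hpoi : poisson u y = INR d * poisson p z).
  { unfold y. rewrite <- Hfix, poisson_mobius, Hden by assumption. field. lra. }
  assert (Hlow : (1 - Cnorm2 w) * (1 - Cnorm2 z) / 4 <= 1 - Cnorm2 y).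
  { unfold y. rewrite one_sub_Cnorm2_mobius by lra.
    pose proof (mobius_den_pos w z Hw (Rlt_le _ _ Hz)).
    assert (Cnorm2 (1 - Cconj w * z)%C <= 4).
    { apply Cnorm2_one_sub_le_4. rewrite Cnorm2_mult, Cnorm2_conj.
      pose proof (Cnorm2_ge0 w). pose proof (Cnorm2_ge0 z). nra. }
    apply Rmult_le_compat_l; [nra|]. apply Rinv_le_contravar; lra. }
  pose proof (poisson_pow u y d Hd Hu Hy) as Hgain.
  rewrite Hup, Hpoi in Hgain.
  split.
  - rewrite Cnorm2_pow. apply pow_lt_1_compat; [split; [apply Cnorm2_ge0|exact Hy]|lia].
  - assert (HD3 : 0 < INR d ^ 3) by (apply pow_lt; lra).
    replace (INR d * poisson p z / INR d) with (poisson p z) in Hgain by (field; lra).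
    replace ((1 - Cnorm2 w) / (4 * INR d ^ 3) * (1 - Cnorm2 z))
      with ((1 - Cnorm2 w) * (1 - Cnorm2 z) / 4 / INR d ^ 3) by (field; lra).
    assert ((1 - Cnorm2 w) * (1 - Cnorm2 z) / 4 / INR d ^ 3 <= (1 - Cnorm2 y) / INR d ^ 3)
      by (apply Rmult_le_compat_r; [left; apply Rinv_0_lt_compat|]; lra).
    lra.
Qed.

Lemma is_lim_seq_0_of_gain (g a : nat -> R) (c : R) :
  0 < c -> Un_growing g -> (forall n, 0 <= a n) ->
  (forall n, a n * g n <= 2) -> (forall n, c * a n ^ 2 <= g (S n) - g n) ->
  is_lim_seq a 0.
Proof.
  intros Hc Hg Ha Hbound Hgain.
  apply is_lim_seq_spec. intros eps. pose proof (cond_pos eps) as He.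
  destruct (classic (exists M, forall n, g n <= M)) as [[M HM]|Hunb].
  - destruct (ex_finite_lim_seq_incr g M Hg HM) as [l Hl].
    assert (Hdiff : is_lim_seq (fun n => g (S n) - g n) 0).
    { replace 0 with (l - l) by ring.
      apply is_lim_seq_minus'; [apply -> is_lim_seq_incr_1|]; exact Hl. }
    apply is_lim_seq_spec in Hdiff.
    assert (Hce : 0 < c * eps ^ 2) by (apply Rmult_lt_0_compat; [|apply pow_lt]; lra).
    destruct (Hdiff (mkposreal _ Hce)) as [N HN].
    exists N. intros n Hn. specialize (HN n Hn). simpl in HN.
    rewrite Rminus_0_r in HN |- *. pose proof (Hgain n). pose proof (Ha n).
    rewrite Rabs_right in HN |- * by nra.
    assert (a n ^ 2 < eps ^ 2) by (apply (Rmult_lt_reg_l c); lra).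
    nra.
  - assert (HN : exists N, 2 / eps < g N).
    { apply NNPP. intros Hle. apply Hunb. exists (2 / eps). intros n.
      apply Rnot_lt_le. intros Hlt. apply Hle. exists n. exact Hlt. }
    destruct HN as [N HN].
    exists N. intros n Hn.
    pose proof (growing_prop g n N Hg Hn). pose proof (Hbound n). pose proof (Ha n).
    assert (Hgn : 2 / eps < g n) by lra.
    assert (0 < g n) by (pose proof (Rdiv_lt_0_compat 2 eps ltac:(lra) He); lra).
    rewrite Rminus_0_r, Rabs_right by lra.
    apply (Rmult_lt_reg_r (g n)); [assumption|].
    apply (Rmult_lt_compat_l eps) in Hgn; [|exact He].
    replace (eps * (2 / eps)) with 2 in Hgn by (field; lra).
    lra.
Qed.

Lemma iter_converges_of_poisson_gain (f : C -> C) (p : C) (c : R) :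
  Cnorm2 p = 1 -> 0 < c ->
  (forall z, Cnorm2 z < 1 ->
     Cnorm2 (f z) < 1 /\ poisson p z + c * (1 - Cnorm2 z) <= poisson p (f z)) ->
  forall z, Cnorm2 z < 1 ->
  filterlim (fun n : nat => Nat.iter n f z) eventually (locally p).
Proof.
  intros Hp Hc Hf z Hz.
  set (zs := fun n => Nat.iter n f z).
  assert (Hin : forall n, Cnorm2 (zs n) < 1)
    by (induction n as [|n IH]; [exact Hz | exact (proj1 (Hf _ IH))]).
  set (g := fun n => poisson p (zs n)).
  assert (Hg : Un_growing g).
  { intro n. destruct (Hf _ (Hin n)) as [_ H]. pose proof (Hin n). unfold g. simpl. nra. }
  assert (Hlim : is_lim_seq (fun n => Cmod (zs n - p)%C) 0).
  { apply (is_lim_seq_0_of_gain g _ (c * g O)).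
    - pose proof (poisson_pos p z Hp Hz). apply Rmult_lt_0_compat; assumption.
    - exact Hg.
    - intro n. apply Cmod_ge_0.
    - intro n. exact (Cmod_sub_mul_poisson_le p (zs n) Hp (Hin n)).
    - intro n. destruct (Hf _ (Hin n)) as [_ Hstep].
      change (poisson p (f (zs n))) with (g (S n)) in Hstep. fold (g n) in Hstep.
      assert (Hkernel : 1 - Cnorm2 (zs n) = Cmod (zs n - p)%C ^ 2 * g n).
      { unfold g, poisson. pose proof (Cnorm2_sub_pos p (zs n) Hp (Hin n)).
        replace (zs n - p)%C with (- (p - zs n))%C by ring.
        rewrite Cmod_opp, <- Cnorm2_Cmod. field. lra. }
      pose proof (growing_prop g n O Hg (Nat.le_0_l n)).
      assert (0 <= c * Cmod (zs n - p)%C ^ 2) by (pose proof (pow2_ge_0 (Cmod (zs n - p)%C)); nra).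
      nra. }
  apply filterlim_locally. intros eps.
  apply is_lim_seq_spec in Hlim. destruct (Hlim eps) as [N HN].
  exists N. intros n Hn. apply (norm_compat1 (V := C_NormedModule)).
  specialize (HN n Hn). rewrite Rminus_0_r, Rabs_right in HN by apply Rle_ge, Cmod_ge_0.
  exact HN.
Qed.

Lemma is_DW_point_unique (f : C -> C) (a b : C) :
  is_DW_point f a -> is_DW_point f b -> a = b.
Proof.
  intros [_ Ha] [_ Hb].
  assert (H0 : Cmod 0 < 1) by (rewrite Cmod_0; lra).
  exact (filterlim_locally_unique (fun n : nat => Nat.iter n f 0%C) a b (Ha _ H0) (Hb _ H0)).
Qed.

Lemma Cnorm2_expi (t : R) : Cnorm2 (expi t) = 1.
Proof. unfold Cnorm2, expi; simpl. pose proof (sin2_cos2 t). unfold Rsqr in H. lra. Qed.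

Lemma Cpow_expi (t : R) (n : nat) : Cpow (expi t) n = expi (INR n * t).
Proof.
  induction n as [|n IH].
  - simpl. unfold expi. rewrite Rmult_0_l, cos_0, sin_0. reflexivity.
  - change (Cpow (expi t) (S n)) with (expi t * Cpow (expi t) n)%C. rewrite IH, S_INR.
    replace ((INR n + 1) * t) with (INR n * t + t) by ring.
    unfold expi. rewrite cos_plus, sin_plus. apply injective_projections; simpl; ring.
Qed.

Theorem corollary2p2 (d : nat) (theta : R) :
  (2 <= d)%nat ->
  let w : C := ((expi (INR d * theta) - RtoC (INR d) * expi theta)
                / RtoC (INR (d + 1)))%C in
  (Cmod w < 1)%R ->
  is_DW_point (Bw d w) (expi (INR d * theta)) /\
  (forall z0 : C, is_DW_point (Bw d w) z0 -> z0 = expi (INR d * theta)).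
Proof.
  intros Hd w Hw.
  set (p := expi (INR d * theta)). set (u := expi theta).
  assert (HD : 0 < INR d) by (apply lt_0_INR; lia).
  assert (Hw2 : Cnorm2 w < 1) by exact (Cnorm2_lt_1 w Hw).
  assert (Hp : Cnorm2 p = 1) by apply Cnorm2_expi.
  assert (Hu : Cnorm2 u = 1) by apply Cnorm2_expi.
  assert (Hup : Cpow u d = p) by apply Cpow_expi.
  assert (Hwdef : w = ((p - RtoC (INR d) * u) / RtoC (INR d + 1))%C)
    by (unfold w; rewrite plus_INR; reflexivity).
  destruct (mobius_boundary p u w (INR d) HD Hp Hu Hwdef Hw2) as [Hfix Hden].
  assert (HDW : is_DW_point (Bw d w) p).
  { split.
    - rewrite <- (sqrt_1), <- Hp, Cnorm2_Cmod, sqrt_pow2 by apply Cmod_ge_0. lra.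
    - intros z Hz.
      apply (iter_converges_of_poisson_gain _ p ((1 - Cnorm2 w) / (4 * INR d ^ 3)) Hp).
      + apply Rdiv_lt_0_compat; [lra|]. pose proof (pow_lt _ 3 HD). lra.
      + intros z' Hz'. exact (poisson_Bw_gain d p u w z' Hd Hu Hup Hw2 Hfix Hden Hz').
      + exact (Cnorm2_lt_1 z Hz). }
  split; [exact HDW|].
  intros z0 H0. exact (is_DW_point_unique _ _ _ H0 HDW).
Qed.
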